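(* Let $F\in L^1(\mathbb T^d;\mathbb H^{m\times n})$, written $F(\boldsymbol\theta)=Z(\boldsymbol\theta)+W(\boldsymbol\theta)\mathbf j$ with $Z,W:\mathbb T^d\to\mathbb C_{\mathbf i}^{m\times n}$, and fix an ordered partition $S_L\dot\cup S_R=\{1,\dots,d\}$. For $\boldsymbol m\in\mathbb Z^d$ define $\tilde{\boldsymbol m}$ by $\tilde m_j=m_j$ for $j\in S_L$ and $\tilde m_j=-m_j$ for $j\in S_R$. Then for every $\boldsymbol m\in\mathbb Z^d$, $$\Phi\bigl(\widehat F^{(S_L,S_R)}(\boldsymbol m)\bigr)=\begin{bmatrix}\widehat Z(\boldsymbol m)&\widehat W(\tilde{\boldsymbol m})\\ -\widehat{\overline W}(-\tilde{\boldsymbol m})&\widehat{\overline Z}(-\boldsymbol m)\end{bmatrix},$$ where hats on the right denote ordinary complex matrix Fourier coefficients $\widehat G(\boldsymbol k)=(2\pi)^{-d}\int_{\mathbb T^d}G(\boldsymbol\theta)e^{-\mathbf i\langle\boldsymbol k,\boldsymbol\theta\rangle}d\boldsymbol\theta$.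
   Context: $\mathbb H$ is the quaternion algebra with units $\mathbf i,\mathbf j,\mathbf k=\mathbf i\mathbf j$; $\mathbb C_{\mathbf i}=\operatorname{span}_{\mathbb R}\{1,\mathbf i\}\cong\mathbb C$; bar is complex conjugation on $\mathbb C_{\mathbf i}$. For $A=Z+W\mathbf j$ ($Z,W\in\mathbb C_{\mathbf i}^{m\times n}$), $\Phi(A)=\begin{bmatrix}Z&W\\-\overline W&\overline Z\end{bmatrix}$. $\mathbb T^d=[-\pi,\pi)^d$ with Lebesgue measure. For $S\subseteq\{1,\dots,d\}$, $\langle\boldsymbol m,\boldsymbol\theta\rangle_S=\sum_{j\in S}m_j\theta_j$. The sandwich Fourier coefficient is $\widehat F^{(S_L,S_R)}(\boldsymbol m)=(2\pi)^{-d}\int_{\mathbb T^d}e^{-\mathbf i\langle\boldsymbol m,\boldsymbol\theta\rangle_{S_L}}F(\boldsymbol\theta)e^{-\mathbf i\langle\boldsymbol m,\boldsymbol\theta\rangle_{S_R}}d\boldsymbol\theta\in\mathbb H^{m\times n}$. *)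

From HB Require Import structures.
From mathcomp Require Import all_boot all_order all_algebra.
From mathcomp Require Import all_classical all_reals all_analysis.
From mathcomp Require Import complex.
Unset Printing Implicit Defensive.
Import Order.TTheory GRing.Theory Num.Theory.
Import numFieldNormedType.Exports.
Local Open Scope classical_set_scope.
Local Open Scope ring_scope.

Section Defs.
Context {R : realType}.

Fixpoint lebesgue_tuple (n : nat) : set (n.-tuple R) -> \bar R :=
  match n return set (n.-tuple R) -> \bar R with
  | 0 => fun A => (\d_ [tuple] A)%E
  | n'.+1 => fun A =>
      (product_measure1 (@lebesgue_measure R) (@lebesgue_tuple n'))
        [set p | A (cons_tuple p.1 p.2)]
  end.

Definition torus (d : nat) : set (d.-tuple R) :=
  [set t | forall j : 'I_d, - pi <= tnth t j < pi].

Definition torus_integral {d : nat} (f : d.-tuple R -> R) : R :=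
  fine (\int[(@lebesgue_tuple d)]_(x in torus d) (f x)%:E)%E.

Definition torus_integrable {d : nat} (f : d.-tuple R -> R) : Prop :=
  integrable (@lebesgue_tuple d) (torus d) (fun x => (f x)%:E).

Record quat := Quat { q0 : R; q1 : R; q2 : R; q3 : R }.

Definition qadd (p q : quat) : quat :=
  Quat (q0 p + q0 q) (q1 p + q1 q) (q2 p + q2 q) (q3 p + q3 q).

Definition qmul (p q : quat) : quat :=
  Quat (q0 p * q0 q - q1 p * q1 q - q2 p * q2 q - q3 p * q3 q)
       (q0 p * q1 q + q1 p * q0 q + q2 p * q3 q - q3 p * q2 q)
       (q0 p * q2 q - q1 p * q3 q + q2 p * q0 q + q3 p * q1 q)
       (q0 p * q3 q + q1 p * q2 q - q2 p * q1 q + q3 p * q0 q).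

Definition qj : quat := Quat 0 0 1 0.

Definition qofC (z : R[i]) : quat := Quat (complex.Re z) (complex.Im z) 0 0.

Definition cexpi (t : R) : R[i] := Complex (cos t) (sin t).
Definition qexpi (t : R) : quat := qofC (cexpi t).

Definition qmx_of {m n : nat} (Z W : 'M[R[i]]_(m, n)) : 'M[quat]_(m, n) :=
  \matrix_(p, q) qadd (qofC (Z p q)) (qmul (qofC (W p q)) qj).

(* For A = Z + W j: Z and W (note a + b i + c j + d k = (a + b i) + (c + d i) j) *)
Definition qmxZ {m n : nat} (A : 'M[quat]_(m, n)) : 'M[R[i]]_(m, n) :=
  map_mx (fun q => Complex (q0 q) (q1 q)) A.
Definition qmxW {m n : nat} (A : 'M[quat]_(m, n)) : 'M[R[i]]_(m, n) :=
  map_mx (fun q => Complex (q2 q) (q3 q)) A.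

Definition Phi {m n : nat} (A : 'M[quat]_(m, n)) : 'M[R[i]]_(m + m, n + n) :=
  block_mx (qmxZ A) (qmxW A)
           (- map_mx conjc (qmxW A)) (map_mx conjc (qmxZ A)).

Definition ipS {d : nat} (S : {set 'I_d}) (k : 'I_d -> int) (t : d.-tuple R) : R :=
  \sum_(j in S) (k j)%:~R * tnth t j.

Definition ip {d : nat} (k : 'I_d -> int) (t : d.-tuple R) : R :=
  \sum_(j < d) (k j)%:~R * tnth t j.

Definition quat_L1 {d m n : nat} (F : d.-tuple R -> 'M[quat]_(m, n)) : Prop :=
  forall p q, [/\ torus_integrable (fun t => q0 (F t p q)),
                  torus_integrable (fun t => q1 (F t p q)),
                  torus_integrable (fun t => q2 (F t p q)) &
                  torus_integrable (fun t => q3 (F t p q))].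

Definition quat_mean {d m n : nat} (G : d.-tuple R -> 'M[quat]_(m, n)) : 'M[quat]_(m, n) :=
  \matrix_(p, q)
    Quat ((2 * pi) ^- d * torus_integral (fun t => q0 (G t p q)))
         ((2 * pi) ^- d * torus_integral (fun t => q1 (G t p q)))
         ((2 * pi) ^- d * torus_integral (fun t => q2 (G t p q)))
         ((2 * pi) ^- d * torus_integral (fun t => q3 (G t p q))).

Definition sandwich_fourier {d m n : nat} (SL SR : {set 'I_d})
    (F : d.-tuple R -> 'M[quat]_(m, n)) (k : 'I_d -> int) : 'M[quat]_(m, n) :=
  quat_mean (fun t => map_mx (fun x =>
      qmul (qmul (qexpi (- ipS SL k t)) x) (qexpi (- ipS SR k t))) (F t)).

Definition cfourier {d m n : nat} (G : d.-tuple R -> 'M[R[i]]_(m, n))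
    (k : 'I_d -> int) : 'M[R[i]]_(m, n) :=
  \matrix_(p, q)
    (let g := fun t => G t p q * cexpi (- ip k t) in
     Complex ((2 * pi) ^- d * torus_integral (fun t => complex.Re (g t)))
             ((2 * pi) ^- d * torus_integral (fun t => complex.Im (g t)))).

End Defs.
Arguments quat R : clear implicits.

From HB Require Import structures.
From mathcomp Require Import all_boot all_order all_algebra.
From mathcomp Require Import all_classical all_reals all_analysis.
From mathcomp Require Import complex ring.
(* Restores finset's [set0], [in_setC], ... shadowed by classical_sets. *)
From mathcomp Require Import finset.
Set Implicit Arguments.
Unset Strict Implicit.
Unset Printing Implicit Defensive.
Import Order.TTheory GRing.Theory Num.Theory.
Local Open Scope ring_scope.

(* Write e(a) for e^{ia} in C_i.  Since j e(b) = e(-b) j, sandwiching a quaternion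
   z + w j between e(a) and e(b) gives z e(a + b) + w e(a - b) j.  With
   a = -<m,θ>_{S_L} and b = -<m,θ>_{S_R} the two frequencies are -<m,θ> and
   -<m~,θ>, so after componentwise integration the Z- and W-parts of the sandwich
   coefficient are ordinary Fourier coefficients of Z and W.  The conjugate
   blocks of Φ follow from conj(w e(-x)) = conj(w) e(x), because the integral
   commutes with negation. *)

Lemma fine_subeC (R : numDomainType) (a b : \bar R) :
  fine (a - b)%E = - fine (b - a)%E.
Proof. by case: a => [a| |]; case: b => [b| |] //=; rewrite ?oppr0 // opprB. Qed.

Lemma fine_integralN d (T : measurableType d) (R : realType)
    (mu : set T -> \bar R) (D : set T) (f : T -> R) :
  fine (\int[mu]_(x in D) (- f x)%:E)%E = - fine (\int[mu]_(x in D) (f x)%:E)%E.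
Proof.
(* No integrability is needed: negation swaps f^+ and f^-, and fine sends
   both undefined differences to 0. *)
rewrite /integral.
have -> : (fun x => (- f x)%:E) \_ D = (fun x => - ((EFin \o f) \_ D) x)%E.
  by apply/funext => x; rewrite !patchE; case: (x \in D); rewrite /= ?oppr0.
by rewrite funeposN funenegN fine_subeC.
Qed.

Section Sandwich.
Variable R : realType.

Lemma qofC_add_mul_qj (z w : R[i]) :
  qadd (qofC z) (qmul (qofC w) qj) =
  Quat (complex.Re z) (complex.Im z) (complex.Re w) (complex.Im w).
Proof. by rewrite /qadd /qmul /=; congr Quat; ring. Qed.

Lemma qexpi_sandwich (a b : R) (z w : R[i]) :
  qmul (qmul (qexpi a) (qadd (qofC z) (qmul (qofC w) qj))) (qexpi b) =
  qadd (qofC (cexpi (a + b) * z)) (qmul (qofC (cexpi (a - b) * w)) qj).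
Proof.
rewrite !qofC_add_mul_qj; case: z => x y; case: w => u v.
by rewrite /qexpi /qofC /cexpi /qmul /= cosD sinD cosB sinB; congr Quat; ring.
Qed.

Lemma qmx_ofE m n (Z W : 'M[R[i]]_(m, n)) p q :
  qmx_of Z W p q =
  Quat (complex.Re (Z p q)) (complex.Im (Z p q))
       (complex.Re (W p q)) (complex.Im (W p q)).
Proof. by rewrite mxE qofC_add_mul_qj. Qed.

Lemma map_mx_sandwich_qmx_of m n (a b : R) (Z W : 'M[R[i]]_(m, n)) :
  map_mx (fun x => qmul (qmul (qexpi a) x) (qexpi b)) (qmx_of Z W) =
  qmx_of (cexpi (a + b) *: Z) (cexpi (a - b) *: W).
Proof. by apply/matrixP => p q; rewrite !mxE qexpi_sandwich. Qed.

Lemma Phi_qmx_of m n (Z W : 'M[R[i]]_(m, n)) :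
  Phi (qmx_of Z W) = block_mx Z W (- map_mx conjc W) (map_mx conjc Z).
Proof.
have qmxZE : qmxZ (qmx_of Z W) = Z.
  by apply/matrixP => p q; rewrite mxE qmx_ofE /=; case: (Z p q).
have qmxWE : qmxW (qmx_of Z W) = W.
  by apply/matrixP => p q; rewrite mxE qmx_ofE /=; case: (W p q).
by rewrite /Phi qmxZE qmxWE.
Qed.

Lemma conjc_cexpi (x : R) : (cexpi x)^*%C = cexpi (- x).
Proof. by rewrite /cexpi cosN sinN. Qed.

Lemma map_mx_conjcZ m n (c : R[i]) (A : 'M[R[i]]_(m, n)) :
  map_mx conjc (c *: A) = c^*%C *: map_mx conjc A.
Proof. exact: map_mxZ. Qed.

End Sandwich.

Section TorusMean.
Variables (R : realType) (d : nat).

Definition cmean (g : d.-tuple R -> R[i]) : R[i] :=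
  Complex ((2 * pi) ^- d * torus_integral (fun t => complex.Re (g t)))
          ((2 * pi) ^- d * torus_integral (fun t => complex.Im (g t))).

Definition cmean_mx {m n : nat} (G : d.-tuple R -> 'M[R[i]]_(m, n)) : 'M[R[i]]_(m, n) :=
  \matrix_(p, q) cmean (fun t => G t p q).

Lemma torus_integralN (f : d.-tuple R -> R) :
  torus_integral (fun t => - f t) = - torus_integral f.
Proof. exact: fine_integralN. Qed.

Lemma cmean_conjc (g : d.-tuple R -> R[i]) :
  cmean (fun t => (g t)^*%C) = (cmean g)^*%C.
Proof.
rewrite /cmean /= -mulrN -torus_integralN.
by congr Complex; congr (_ * torus_integral _); apply/funext => t; case: (g t).
Qed.

Lemma map_mx_conjc_cmean_mx m n (G : d.-tuple R -> 'M[R[i]]_(m, n)) :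
  map_mx conjc (cmean_mx G) = cmean_mx (fun t => map_mx conjc (G t)).
Proof.
apply/matrixP => p q; rewrite !mxE -cmean_conjc.
by congr cmean; apply/funext => t; rewrite mxE.
Qed.

Lemma cfourierE m n (G : d.-tuple R -> 'M[R[i]]_(m, n)) (k : 'I_d -> int) :
  cfourier G k = cmean_mx (fun t => cexpi (- ip k t) *: G t).
Proof.
apply/matrixP => p q; rewrite !mxE.
by congr cmean; apply/funext => t; rewrite mxE mulrC.
Qed.

Lemma quat_mean_qmx_of m n (Z W : d.-tuple R -> 'M[R[i]]_(m, n)) :
  quat_mean (fun t => qmx_of (Z t) (W t)) = qmx_of (cmean_mx Z) (cmean_mx W).
Proof.
apply/matrixP => p q; rewrite qmx_ofE !mxE /=.
by congr Quat; congr (_ * torus_integral _); apply/funext => t; rewrite qmx_ofE.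
Qed.

Lemma ipN (k : 'I_d -> int) (t : d.-tuple R) : ip (fun j => - k j) t = - ip k t.
Proof. by rewrite /ip -sumrN; apply: eq_bigr => j _; rewrite mulrNz mulNr. Qed.

End TorusMean.

Section PartitionedPairing.
Variables (R : realType) (d : nat) (SL SR : {set 'I_d}).
Hypothesis SR_compl : SR = ~: SL.

Definition negate_outside (k : 'I_d -> int) : 'I_d -> int :=
  fun j => if j \in SL then k j else - k j.

Lemma ip_ipS (k : 'I_d -> int) (t : d.-tuple R) : ip k t = ipS SL k t + ipS SR k t.
Proof.
rewrite /ip /ipS SR_compl (bigID (mem SL)) /=; congr (_ + _).
by apply: eq_bigl => j; rewrite in_setC.
Qed.

Lemma ip_negate_outside (k : 'I_d -> int) (t : d.-tuple R) :
  ip (negate_outside k) t = ipS SL k t - ipS SR k t.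
Proof.
rewrite ip_ipS /ipS SR_compl -sumrN; congr (_ + _); apply: eq_bigr => j.
  by rewrite /negate_outside => ->.
by rewrite in_setC /negate_outside => /negbTE ->; rewrite mulrNz mulNr.
Qed.

End PartitionedPairing.

Theorem mainTheorem3 (R : realType) (d m n : nat)
    (F : d.-tuple R -> 'M[quat R]_(m, n))
    (Z W : d.-tuple R -> 'M[R[i]]_(m, n))
    (SL SR : {set 'I_d}) :
  quat_L1 F ->
  (forall t, F t = qmx_of (Z t) (W t)) ->
  SL :&: SR = set0 -> SL :|: SR = [set: 'I_d] ->
  forall k : 'I_d -> int,
  let kt : 'I_d -> int := fun j => if j \in SL then k j else - k j in
  Phi (sandwich_fourier SL SR F k) =
  block_mx (cfourier Z k) (cfourier W kt)
           (- cfourier (fun t => map_mx conjc (W t)) (fun j => - kt j))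
           (cfourier (fun t => map_mx conjc (Z t)) (fun j => - k j)).
Proof.
move=> _ FE disjLR coverLR k kt.
have SR_compl : SR = ~: SL.
  apply/setP => j; move/setP/(_ j): disjLR; move/setP/(_ j): coverLR.
  by rewrite !inE; case: (j \in SL); case: (j \in SR).
have -> : sandwich_fourier SL SR F k =
          quat_mean (fun t => qmx_of (cexpi (- ip k t) *: Z t)
                                     (cexpi (- ip kt t) *: W t)).
  rewrite /sandwich_fourier; congr quat_mean; apply/funext => t.
  rewrite FE map_mx_sandwich_qmx_of (ip_ipS SR_compl).
  by rewrite (ip_negate_outside SR_compl) !opprD.
rewrite quat_mean_qmx_of Phi_qmx_of !cfourierE !map_mx_conjc_cmean_mx.
by congr block_mx; [congr (- _)|]; congr cmean_mx; apply/funext => t;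
  rewrite map_mx_conjcZ conjc_cexpi ipN opprK.
Qed.
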